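(* Let $n>1$ and let $G$ be a bipartite graph having two vertices $x$ and $y$ in the same partite set such that $N(x)$ is a proper subset of $N(y)$. Let $H=G+K_1$ and suppose $H[\overline{K_n}]$ admits a local distance antimagic labeling. Then $\chi_{ld}(H[\overline{K_{n}}])\geq 4$.
   Context: All graphs are finite, simple and undirected. $N(v)$ is the open neighborhood of $v$. For a graph $G=(V,E)$ of order $N$ without isolated vertices, a bijection $f\colon V\to\{1,2,\dots,N\}$ is a local distance antimagic labeling if $w(u)\neq w(v)$ for every edge $uv$, where $w(u)=\sum_{x\in N(u)}f(x)$. $\chi_{ld}(G)$ is the minimum number of distinct weights over all local distance antimagic labelings of $G$. $\overline{K_n}$ is the edgeless graph on $n$ vertices. $G+K_1$ is $G$ together with a new vertex adjacent to all vertices of $G$. The lexicographic product $G[H]$ has vertex set $V(G)\times V(H)$, with $(g,h)$ adjacent to $(g',h')$ iff $gg'\in E(G)$, or $g=g'$ and $hh'\in E(H)$. *)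

From mathcomp Require Import all_boot.
Set Implicit Arguments. Unset Strict Implicit. Unset Printing Implicit Defensive.

(* A finite simple graph on a finType T is a symmetric irreflexive relation e. *)

Definition nbhd (T : finType) (e : rel T) (v : T) : {set T} := [set x | e v x].

Definition bipartite_same_side (T : finType) (e : rel T) (x y : T) : Prop :=
  exists c : T -> bool, (forall u v, e u v -> c u != c v) /\ c x = c y.

(* G + K_1 : the new vertex is None, adjacent to every Some v. *)
Definition joinK1 (T : finType) (e : rel T) : rel (option T) :=
  fun a b => match a, b with
             | Some u, Some v => e u v
             | None, Some _ | Some _, None => true
             | None, None => false
             end.

(* The edgeless graph on U (used with U = 'I_n for \overline{K_n}). *)
Definition edgeless (U : finType) : rel U := fun _ _ => false.

Definition lexprod (T U : finType) (eG : rel T) (eH : rel U) : rel (T * U) :=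
  fun p q => eG p.1 q.1 || ((p.1 == q.1) && eH p.2 q.2).

(* A labeling: f : V -> 'I_#|V|, vertex v receives label (f v).+1 in {1..N};
   injectivity of f makes it a bijection V -> {1,...,N}. *)
Definition labeling (V : finType) := {ffun V -> 'I_#|V|}.

Definition weight (V : finType) (e : rel V) (f : labeling V) (u : V) : nat :=
  \sum_(x | e u x) (f x).+1.

Definition is_ldal (V : finType) (e : rel V) (f : labeling V) : bool :=
  injectiveb f &&
  [forall u, forall v, e u v ==> (weight e f u != weight e f v)].

Definition num_weights (V : finType) (e : rel V) (f : labeling V) : nat :=
  size (undup (codom (weight e f))).

(* The default #|V| is an upper bound on num_weights, so when at least one such
   labeling exists this is exactly the minimum. *)
Definition chi_ld (V : finType) (e : rel V) : nat :=
  \big[minn/#|V|]_(f : labeling V | is_ldal e f) num_weights e f.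

From mathcomp Require Import all_boot.

(* In H[\overline{K_n}] the vertex (v, i) is adjacent to every copy of every
   H-neighbour of v, so its weight is the sum of the labels on all copies of
   N_H(v); all labels being positive, a proper inclusion N_H(v) < N_H(v')
   forces a strictly smaller weight.  Fix one copy of each vertex of H.
   The apex of G + K_1 is adjacent to all other vertices, and N(x) < N(y)
   gives w(x) < w(y).  If x has a neighbour u in G, then u is also adjacent
   to y, and x, y, u, apex carry four distinct weights.  Otherwise N(x) is
   empty, so N(x) < N(z) for any z in N(y) \ N(x), and x, y, z, apex carry
   four distinct weights. *)

Lemma weight_lt_nbhd_proper (V : finType) (e : rel V) (f : labeling V) u v :
  nbhd e u \proper nbhd e v -> weight e f u < weight e f v.
Proof.
move=> /properP [/subsetP sub_uv [c c_v c_u]]; rewrite !inE in c_v c_u.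
rewrite /weight [X in _ < X](bigID (e u)) /=.
have -> : \sum_(x | e v x && e u x) (f x).+1 = \sum_(x | e u x) (f x).+1.
  apply: eq_bigl => x; apply/andP/idP => [[] // | e_ux]; split=> //.
  by have := sub_uv x; rewrite !inE; apply.
rewrite -[X in X < _]addn0 ltn_add2l (bigD1 c) //=.
by rewrite c_v c_u.
Qed.

Lemma ldal_weight_neq (V : finType) (e : rel V) (f : labeling V) u v :
  is_ldal e f -> e u v -> weight e f u != weight e f v.
Proof. by case/andP=> _ /forallP /(_ u) /forallP /(_ v) /implyP; apply. Qed.

Lemma leq_num_weights (V : finType) (e : rel V) (f : labeling V) (s : seq V) :
  uniq (map (weight e f) s) -> size s <= num_weights e f.
Proof.
move=> uniq_ws; rewrite -(size_map (weight e f)).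
rewrite (uniq_leq_size uniq_ws) // => k.
by case/mapP => v _ ->; rewrite mem_undup codom_f.
Qed.

Lemma chi_ld_ge (V : finType) (e : rel V) k :
  k <= #|V| -> (forall f, is_ldal e f -> k <= num_weights e f) ->
  k <= chi_ld e.
Proof.
move=> k_le_V k_le_f; apply: (big_ind (fun m => k <= m)) => //.
by move=> m1 m2 k_m1 k_m2; rewrite leq_min k_m1 k_m2.
Qed.

Lemma lexprod_edgelessE (T U : finType) (eG : rel T) p q :
  lexprod eG (@edgeless U) p q = eG p.1 q.1.
Proof. by rewrite /lexprod /edgeless andbF orbF. Qed.

Lemma nbhd_lexprod_edgeless_proper (T U : finType) (eG : rel T) a b (i : U) :
  nbhd eG a \proper nbhd eG b ->
  nbhd (lexprod eG (@edgeless U)) (a, i)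
    \proper nbhd (lexprod eG (@edgeless U)) (b, i).
Proof.
move=> /properP [/subsetP sub_ab [c c_b c_a]]; rewrite !inE in c_b c_a.
apply/properP; split.
  apply/subsetP => q; rewrite !inE !lexprod_edgelessE => e_aq.
  by have := sub_ab q.1; rewrite !inE; apply.
by exists (c, i); rewrite !inE !lexprod_edgelessE.
Qed.

Lemma nbhd_joinK1_proper (T : finType) (e : rel T) x y :
  nbhd e x \proper nbhd e y ->
  nbhd (joinK1 e) (Some x) \proper nbhd (joinK1 e) (Some y).
Proof.
move=> /properP [/subsetP sub_xy [c c_y c_x]]; rewrite !inE in c_y c_x.
apply/properP; split.
  apply/subsetP => -[v|]; rewrite !inE //= => e_xv.
  by have := sub_xy v; rewrite !inE; apply.
by exists (Some c); rewrite !inE.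
Qed.

Section BlownUpCone.

Variables (T : finType) (e : rel T) (n : nat) (i0 : 'I_n).
Hypothesis e_sym : symmetric e.

Local Notation E := (lexprod (joinK1 e) (@edgeless 'I_n)).

Variable f : labeling (option T * 'I_n)%type.
Hypothesis f_ldal : is_ldal E f.

Local Notation w a := (weight E f (a, i0)).

Lemma blowup_weight_lt x y :
  nbhd e x \proper nbhd e y -> w (Some x) < w (Some y).
Proof.
move=> xy; apply: weight_lt_nbhd_proper.
exact/nbhd_lexprod_edgeless_proper/nbhd_joinK1_proper.
Qed.

Lemma blowup_weight_neq a b : joinK1 e a b -> w a != w b.
Proof.
by move=> ab; apply: ldal_weight_neq f_ldal _; rewrite lexprod_edgelessE.
Qed.

Lemma blowup_num_weights_ge4 x y :
  nbhd e x \proper nbhd e y -> 4 <= num_weights E f.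
Proof.
move=> xy; have w_xy : w (Some x) < w (Some y) by apply: blowup_weight_lt.
move/properP: (xy) => [/subsetP sub_xy [z z_y z_x]]; rewrite !inE in z_y z_x.
have y_adj v : e x v -> e y v by have := sub_xy v; rewrite !inE; apply.
have ne_xy : w (Some x) != w (Some y) by rewrite neq_ltn w_xy.
case: (pickP (e x)) => [u x_u | x_isolated].
  apply: (@leq_num_weights _ _ _
    [:: (Some x, i0); (Some y, i0); (Some u, i0); (None, i0)]).
  by rewrite /= !inE !negb_or ne_xy !blowup_weight_neq //= y_adj.
have w_xz : w (Some x) < w (Some z).
  apply: blowup_weight_lt; apply/properP; split.
    by apply/subsetP => v; rewrite inE x_isolated.
  by exists y; rewrite !inE ?x_isolated // e_sym.
apply: (@leq_num_weights _ _ _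
  [:: (Some x, i0); (Some y, i0); (Some z, i0); (None, i0)]).
by rewrite /= !inE !negb_or ne_xy neq_ltn w_xz !blowup_weight_neq.
Qed.

End BlownUpCone.

Theorem mainTheorem16 (T : finType) (e : rel T) (n : nat) (x y : T) :
  symmetric e -> irreflexive e ->
  1 < n ->
  bipartite_same_side e x y ->
  nbhd e x \proper nbhd e y ->
  (exists f : labeling (option T * 'I_n)%type,
      is_ldal (lexprod (joinK1 e) (@edgeless 'I_n)) f) ->
  4 <= chi_ld (lexprod (joinK1 e) (@edgeless 'I_n)).
Proof.
move=> e_sym _ n_gt1 _ xy _.
pose i0 : 'I_n := Ordinal (ltnW n_gt1).
apply: chi_ld_ge => [|f f_ldal].
  rewrite card_prod card_option card_ord (@leq_mul 2 2) //.
  by rewrite ltnS; apply/card_gt0P; exists x.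
exact: blowup_num_weights_ge4 i0 e_sym f f_ldal x y xy.
Qed.
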